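(* Let $\rho=\rho_0$ and let $R=\sum_{m,n\ge 0}\frac1{n!}\binom{\psi}{m}\phi^n\otimes(a-1)^mb^n$. Then $\rho^{\otimes2}(R)$ is a well-defined element of $\operatorname{End}(A^1)^{\otimes 2}[[\hbar]]$, and the operator $r:=\rho^{\otimes2}(R)P$, where $P$ exchanges the two arguments of a function of $(z_0,z_1)$, acts on $A^2[[\hbar]]$ by $$(rf)(z_0,z_1)=f\Big(z_1+\frac{\hbar}{1+\hbar}z_0,\ \frac{1}{1+\hbar}z_0\Big)=f(U^{\top}z),\qquad U=\begin{pmatrix}1-t&t\\1&0\end{pmatrix},\ t=\frac1{1+\hbar}.$$ In particular, for the coherent states $\varphi_v(z)=e^{v^\top z}$ ($v\in\mathbb{C}^2$) one has $r\varphi_v=\varphi_{Uv}$.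
   Context: $\rho_0\colon D(\mathsf{B}_1)\to\operatorname{End}(A^1[[\hbar]])$ is given by $a\mapsto 1+\hbar$, $b\mapsto\partial/\partial z$, $\phi\mapsto\hbar z$, $\psi\mapsto -z\,\partial/\partial z$, $\chi_{u,v}f(z)=e^{\hbar uz}f(vz)$. $A^n$ denotes the span of functions $\mathbb{C}^n\to\mathbb{C}$ of the form $p(z)e^{u^\top z}$ with $p$ a polynomial and $u\in\mathbb{C}^n$; elements of $\mathbb{C}^n$ are column vectors. The binomial $\binom{\psi}{m}=\psi(\psi-1)\cdots(\psi-m+1)/m!$. *)

From Stdlib Require Import Reals Factorial List ClassicalEpsilon.
From Coquelicot Require Import Coquelicot.

Open Scope C_scope.

Definition cexp (z : C) : C :=
  (exp (fst z) * cos (snd z), exp (fst z) * sin (snd z))%R.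

Fixpoint cpow (z : C) (n : nat) : C :=
  match n with O => 1 | S k => z * cpow z k end.

Definition Cderiv (g : C -> C) (z : C) : C :=
  epsilon (inhabits (RtoC 0))
    (fun l : C => @is_derive C_AbsRing C_NormedModule g z l).

Fixpoint Cderiv_n (j : nat) (g : C -> C) : C -> C :=
  match j with O => g | S i => Cderiv (Cderiv_n i g) end.

Definition invfact (n : nat) : C := / RtoC (INR (Factorial.fact n)).

Definition taylor (j : nat) (g : C -> C) : C := Cderiv_n j g 0 * invfact j.

Definition inA1 (f : C -> C) : Prop :=
  exists l : list (C * nat * C),
    forall z, f z = fold_right
      (fun '(c, a, u) acc => c * cpow z a * cexp (u * z) + acc) 0 l.

Definition inA2 (f : C -> C -> C) : Prop :=
  exists l : list (C * nat * nat * C * C),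
    forall z0 z1, f z0 z1 = fold_right
      (fun '(c, a, b, u0, u1) acc =>
         c * cpow z0 a * cpow z1 b * cexp (u0 * z0 + u1 * z1) + acc) 0 l.

(** elements of A^1[[hbar]], A^2[[hbar]] : sequences of hbar-coefficients *)
Definition S1 := nat -> C -> C.
Definition S2 := nat -> C -> C -> C.

Definition inA2ser (G : S2) : Prop := forall k, inA2 (G k).

Definition cser (f : C -> C -> C) : S2 :=
  fun k => match k with O => f | S _ => fun _ _ => 0 end.

Definition hser (g : C -> C -> C -> C) : S2 :=
  fun j z0 z1 => taylor j (fun h => g h z0 z1).

Definition Op1 := S1 -> S1.

Definition op_id : Op1 := fun F => F.
Definition op_comp (X Y : Op1) : Op1 := fun F => X (Y F).
Definition op_sub (X Y : Op1) : Op1 := fun F k z => X F k z - Y F k z.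
Fixpoint op_pow (X : Op1) (n : nat) : Op1 :=
  match n with O => op_id | S m => op_comp X (op_pow X m) end.
Definition op_scale (c : C) (X : Op1) : Op1 := fun F k z => c * X F k z.

(** rho_0(a) = 1 + hbar *)
Definition rho_a : Op1 := fun F k =>
  match k with O => F O | S k' => fun z => F k z + F k' z end.
Definition rho_b : Op1 := fun F k z => Cderiv (F k) z.
(** rho_0(phi) = hbar z *)
Definition rho_phi : Op1 := fun F k =>
  match k with O => fun _ => 0 | S k' => fun z => z * F k' z end.
Definition rho_psi : Op1 := fun F k z => - (z * Cderiv (F k) z).

Fixpoint falling (X : Op1) (m : nat) : Op1 :=
  match m with
  | O => op_id
  | S i => fun F k z => X (falling X i F) k z - RtoC (INR i) * falling X i F k z
  end.

Definition binom_op (X : Op1) (m : nat) : Op1 := op_scale (invfact m) (falling X m).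

Definition tensor (X Y : Op1) (G : S2) : S2 :=
  let G' : S2 := fun k z0 z1 => Y (fun j w => G j z0 w) k z1 in
  fun k z0 z1 => X (fun j w => G' j w z1) k z0.

Definition Rterm (m n : nat) (G : S2) : S2 :=
  fun k z0 z1 => invfact n *
    tensor (op_comp (binom_op rho_psi m) (op_pow rho_phi n))
           (op_comp (op_pow (op_sub rho_a op_id) m) (op_pow rho_b n)) G k z0 z1.

(** rho^{(x)2}(R) : hbar-adic sum over (m,n); the hbar^N coefficient only
    receives contributions from m+n <= N (this is the well-definedness,
    stated as the first conjunct of the theorem). *)
Definition rhoR (G : S2) : S2 :=
  fun N z0 z1 => sum_n (fun m => sum_n (fun n => Rterm m n G N z0 z1) N) N.

Definition Pswap (G : S2) : S2 := fun k z0 z1 => G k z1 z0.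

Definition r_op (G : S2) : S2 := rhoR (Pswap G).

Definition t_of (h : C) : C := / (1 + h).

(** 2x2 matrices as ((U00,U01),(U10,U11)), vectors in C^2 as pairs *)
Definition Umat (h : C) : (C * C) * (C * C) :=
  ((1 - t_of h, t_of h), (RtoC 1, RtoC 0)).

Definition mv (M : (C * C) * (C * C)) (v : C * C) : C * C :=
  (fst (fst M) * fst v + snd (fst M) * snd v,
   fst (snd M) * fst v + snd (snd M) * snd v).

Definition mtv (M : (C * C) * (C * C)) (v : C * C) : C * C :=
  (fst (fst M) * fst v + fst (snd M) * snd v,
   snd (fst M) * fst v + snd (snd M) * snd v).

(** (f(U^T z)) as an element of A^2[[hbar]], for f = sum_k hbar^k f_k :
    each f_k(U(hbar)^T z) is expanded in hbar *)
Definition substU (G : S2) : S2 :=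
  fun N z0 z1 => sum_n (fun k =>
    hser (fun h w0 w1 =>
            let w := mtv (Umat h) (w0, w1) in G k (fst w) (snd w)) (N - k)%nat z0 z1) N.

Definition coh (v : C * C) : C -> C -> C :=
  fun z0 z1 => cexp (fst v * z0 + snd v * z1).

(** Write x = z1, y = z0 for the arguments of a coefficient G_k of
    f = sum_k hbar^k G_k (the exchange P turns (z0, z1) into (z1, z0)).
    On the hbar^N coefficient, the (m,n)-term of rho^{(x)2}(R) P acts as
    (1/(m! n!)) (B)_m A^n G_{N-m-n}, where A = y d/dx (from phi^n (x) b^n),
    B = -y d/dy (from psi), (B)_m is the falling factorial and the term
    vanishes when m + n > N (from (a - 1)^m phi^n).  On the other side,
    g(h) = G_k(U(h)^T z) satisfies g' = t (D G_k)(U^T z) with D = A + B and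
    t = 1/(1+h), t' = -t^2, so g^(j)(0) = ((D)_j G_k)(z1, z0).  Since
    A B = (B + 1) A, the falling factorial obeys the binomial formula
    (D)_M = sum_m M!/(m! (M-m)!) (B)_m A^(M-m), and the two expansions agree
    after reindexing the triangle k + m + n = N. *)

From Stdlib Require Import Reals Lra Lia FunctionalExtensionality ClassicalEpsilon List Factorial.
From Coquelicot Require Import Coquelicot.

(** * Elementary estimates for exp, cos, sin near 0

    They give the quadratic remainder bound for the complex exponential,
    from which its complex differentiability follows. *)

Lemma Rabs_le_inv (a b : R) : Rabs a <= b -> -b <= a <= b.
Proof. unfold Rabs; destruct (Rcase_abs a); lra. Qed.

Lemma exp_remainder (a : R) : Rabs a <= /2 -> 0 <= exp a - 1 - a <= 2 * a^2.
Proof.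
  intros Ha. apply Rabs_le_inv in Ha.
  pose proof (exp_ineq1_le a). pose proof (exp_ineq1_le (-a)). pose proof (exp_pos a).
  assert (E : exp a * exp (-a) = 1)
    by (rewrite <- exp_plus; replace (a + -a) with 0 by ring; apply exp_0).
  assert (exp a * (1 - a) <= 1) by nra.
  split; nra.
Qed.

Lemma cos_remainder (b : R) : Rabs b <= /2 -> Rabs (cos b - 1) <= b^2 / 2.
Proof.
  intros Hb. apply Rabs_le_inv in Hb. pose proof PI2_1.
  destruct (cos_bound b 0) as [Hlow _]; try lra.
  unfold cos_approx, cos_term in Hlow. simpl in Hlow.
  pose proof (COS_bound b).
  rewrite Rabs_left1; lra.
Qed.

Lemma sin_remainder_nonneg (b : R) : 0 <= b <= /2 -> Rabs (sin b - b) <= b^2.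
Proof.
  intros Hb. pose proof PI2_1.
  destruct (sin_bound b 0) as [Hlow Hup]; try lra.
  unfold sin_approx, sin_term in Hlow, Hup. simpl in Hlow, Hup.
  set (b3 := b * (b * (b * 1))) in *. set (b5 := b * (b * (b * (b * (b * 1))))) in *.
  assert (0 <= b3 <= b^2 / 2) by (unfold b3; nra).
  assert (E5 : b5 = b^2 * b3) by (unfold b5, b3; ring).
  assert (0 <= b^2 <= 1/4) by nra.
  assert (0 <= b5 <= b^2 / 2) by (rewrite E5; nra).
  apply Rabs_le. split; lra.
Qed.

Lemma sin_remainder (b : R) : Rabs b <= /2 -> Rabs (sin b - b) <= b^2.
Proof.
  intros Hb. apply Rabs_le_inv in Hb. destruct (Rle_dec 0 b).
  - apply sin_remainder_nonneg. lra.
  - replace (sin b - b) with (- (sin (-b) - (-b))) by (rewrite sin_neg; ring).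
    rewrite Rabs_Ropp. replace (b^2) with ((-b)^2) by ring.
    apply sin_remainder_nonneg. lra.
Qed.

Open Scope C_scope.

Notation isD f x l := (@is_derive C_AbsRing C_NormedModule f x l).

Lemma C_eq (a b : C) : fst a = fst b -> snd a = snd b -> a = b.
Proof. destruct a, b; simpl; intros; subst; reflexivity. Qed.

Lemma cexp_add (a b : C) : cexp (a + b) = cexp a * cexp b.
Proof.
  destruct a as [a1 a2], b as [b1 b2]. unfold cexp; simpl.
  rewrite exp_plus, cos_plus, sin_plus. apply C_eq; simpl; ring.
Qed.

Lemma Cmod_sq (z : C) : (Cmod z ^ 2 = fst z ^ 2 + snd z ^ 2)%R.
Proof. unfold Cmod. rewrite pow2_sqrt; [reflexivity|]. nra. Qed.

Lemma Cmod_ge_components (z : C) : (Rabs (fst z) <= Cmod z /\ Rabs (snd z) <= Cmod z)%R.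
Proof.
  pose proof (Rmax_Cmod z).
  split; eapply Rle_trans; [|apply H| |apply H]; [apply Rmax_l|apply Rmax_r].
Qed.

Lemma Cmod_le_components (z : C) : (Cmod z <= Rabs (fst z) + Rabs (snd z))%R.
Proof.
  destruct z as [p q]. replace (p, q) with (RtoC p + (0, q)) by (apply C_eq; simpl; ring).
  eapply Rle_trans; [apply Cmod_triangle|]. rewrite Cmod_R. simpl.
  unfold Cmod; simpl. replace (0 * (0 * 1) + q * (q * 1))%R with (Rsqr q) by (unfold Rsqr; ring).
  rewrite sqrt_Rsqr_abs, Rplus_0_r, Rplus_0_l. lra.
Qed.

Lemma is_derive_of_quadratic_remainder (f : C -> C) (x l : C) (d K : R) :
  (0 < d)%R -> (0 <= K)%R ->
  (forall y, (Cmod (y - x) < d)%R ->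
     (Cmod (f y - f x - (y - x) * l) <= K * (Cmod (y - x))^2)%R) ->
  isD f x l.
Proof.
  intros Hd HK Hest. split.
  - apply is_linear_scal_l.
  - intros x' Hx'.
    apply (@is_filter_lim_locally_unique C_AbsRing (AbsRing_NormedModule C_AbsRing)) in Hx'.
    subst x'. intros eps.
    assert (Hr : (0 < Rmin d (eps / (K + 1)))%R).
    { apply Rmin_glb_lt; [lra|]. apply Rdiv_lt_0_compat; [apply cond_pos|lra]. }
    apply (filter_imp (fun y => ball_norm x (mkposreal _ Hr) y)).
    2: apply (@locally_ball_norm C_AbsRing (AbsRing_NormedModule C_AbsRing)).
    intros y Hy. unfold ball_norm in Hy. simpl in Hy.
    change (Cmod (f y - f x - (y - x) * l) <= eps * Cmod (y - x))%R.
    change (Cmod (y - x) < Rmin d (eps / (K + 1)))%R in Hy.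
    assert (Hy1 : (Cmod (y - x) < d)%R) by (eapply Rlt_le_trans; [apply Hy|apply Rmin_l]).
    assert (Hy2 : (Cmod (y - x) < eps / (K + 1))%R) by (eapply Rlt_le_trans; [apply Hy|apply Rmin_r]).
    eapply Rle_trans; [apply Hest; auto|].
    pose proof (Cmod_ge_0 (y - x)). pose proof (cond_pos eps).
    assert (Cmod (y - x) * (K + 1) <= eps)%R.
    { apply Rlt_le. apply (Rmult_lt_compat_r (K+1)) in Hy2; [|lra].
      unfold Rdiv in Hy2. rewrite Rmult_assoc, Rinv_l in Hy2; lra. }
    simpl. nra.
Qed.

Lemma Cderiv_eq (f : C -> C) (z l : C) : isD f z l -> Cderiv f z = l.
Proof.
  intros H. unfold Cderiv.
  pose proof (epsilon_spec (inhabits (RtoC 0))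
    (fun l : C => isD f z l) (ex_intro _ l H)) as H'.
  apply is_C_derive_unique in H. apply is_C_derive_unique in H'. congruence.
Qed.

Lemma Rabs_mult_le (x y X Y : R) : (Rabs x <= X -> Rabs y <= Y -> Rabs (x * y) <= X * Y)%R.
Proof. intros. rewrite Rabs_mult. apply Rmult_le_compat; auto; apply Rabs_pos. Qed.

Lemma cexp_remainder (h : C) : (Cmod h <= /2)%R -> (Cmod (cexp h - 1 - h) <= 5 * Cmod h ^ 2)%R.
Proof.
  intros Hh. destruct (Cmod_ge_components h) as [Ha Hb].
  rewrite Cmod_sq. destruct h as [a b]; simpl in *.
  assert (Ha' : (Rabs a <= /2)%R) by lra. assert (Hb' : (Rabs b <= /2)%R) by lra.
  pose proof (exp_remainder a Ha') as HE. pose proof (cos_remainder b Hb') as HC.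
  pose proof (sin_remainder b Hb') as HS.
  set (E := (exp a - 1 - a)%R) in *. set (Cc := (cos b - 1)%R) in *. set (S := (sin b - b)%R) in *.
  eapply Rle_trans; [apply Cmod_le_components|]. unfold cexp. simpl.
  replace (exp a) with (1 + a + E)%R by (unfold E; ring).
  replace (cos b) with (1 + Cc)%R by (unfold Cc; ring).
  replace (sin b) with (b + S)%R by (unfold S; ring).
  assert (a2 : (a ^ 2 = Rabs a * Rabs a)%R) by (rewrite <- Rabs_mult, Rabs_right; [ring | nra]).
  assert (b2 : (b ^ 2 = Rabs b * Rabs b)%R) by (rewrite <- Rabs_mult, Rabs_right; [ring | nra]).
  assert (HEa : (Rabs E <= 2 * a^2)%R) by (rewrite Rabs_right; lra).
  replace ((1 + a + E) * (1 + Cc) + - (1) + - a)%R with (E + ((1 + a) * Cc + E * Cc))%R by ring.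
  replace ((1 + a + E) * (b + S) + - 0 + - b)%R with (S + (a + E) * (b + S))%R by ring.
  pose proof (Rabs_pos a). pose proof (Rabs_pos b).
  assert (H1 : (Rabs (1 + a) <= 3/2)%R) by (apply Rabs_le; apply Rabs_le_inv in Ha'; lra).
  assert (H2 : (Rabs (a + E) <= 2 * Rabs a)%R) by (eapply Rle_trans; [apply Rabs_triang|nra]).
  assert (H3 : (Rabs (b + S) <= 2 * Rabs b)%R) by (eapply Rle_trans; [apply Rabs_triang|nra]).
  pose proof (Rabs_mult_le _ _ _ _ H1 HC). pose proof (Rabs_mult_le _ _ _ _ HEa HC).
  pose proof (Rabs_mult_le _ _ _ _ H2 H3).
  pose proof (Rabs_triang E ((1 + a) * Cc + E * Cc)).
  pose proof (Rabs_triang ((1 + a) * Cc) (E * Cc)).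
  pose proof (Rabs_triang S ((a + E) * (b + S))).
  assert (X1 : (2 * a ^ 2 * (b ^ 2 / 2) <= a^2 / 4)%R).
  { assert (0 <= a^2)%R by nra. assert (b^2 <= 1/4)%R by nra. nra. }
  assert (X2 : (2 * Rabs a * (2 * Rabs b) <= 2 * a^2 + 2 * b^2)%R).
  { rewrite a2, b2. pose proof (pow2_ge_0 (Rabs a - Rabs b)). nra. }
  replace (a * (a * 1) + b * (b * 1))%R with (a ^ 2 + b ^ 2)%R by ring.
  pose proof (pow2_ge_0 a). pose proof (pow2_ge_0 b). lra.
Qed.

Lemma is_derive_cexp (z : C) : isD cexp z (cexp z).
Proof.
  apply (is_derive_of_quadratic_remainder _ _ _ (/2) (5 * Cmod (cexp z)));
    [lra | pose proof (Cmod_ge_0 (cexp z)); lra |].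
  intros y Hy.
  replace y with (z + (y - z)) at 1 by ring. rewrite cexp_add.
  replace (cexp z * cexp (y - z) - cexp z - (y - z) * cexp z) with
    (cexp z * (cexp (y - z) - 1 - (y - z))) by ring.
  rewrite Cmod_mult.
  replace (5 * Cmod (cexp z) * Cmod (y - z) ^ 2)%R
    with (Cmod (cexp z) * (5 * Cmod (y - z) ^ 2))%R by ring.
  apply Rmult_le_compat_l; [apply Cmod_ge_0|]. apply cexp_remainder. lra.
Qed.

Lemma is_derive_Cinv (w : C) : w <> 0 -> isD Cinv w (- (/ w * / w)).
Proof.
  intros Hw. pose proof (proj1 (Cmod_gt_0 w) Hw) as Hm.
  apply (is_derive_of_quadratic_remainder _ _ _ (Cmod w / 2) (2 / (Cmod w ^ 3))); [lra| |].
  { apply Rlt_le, Rdiv_lt_0_compat; [lra| apply pow_lt; lra]. }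
  intros y Hy.
  assert (Hy2 : (Cmod w / 2 <= Cmod y)%R).
  { pose proof (Cmod_triangle y (w - y)) as T.
    replace (y + (w - y)) with w in T by ring.
    replace (w - y) with (- (y - w)) in T by ring. rewrite Cmod_opp in T. lra. }
  assert (Hy0 : y <> 0) by (apply Cmod_gt_0; lra).
  replace (/ y - / w - (y - w) * - (/ w * / w)) with ((y - w) * (y - w) * / (w * w * y))
    by (field; split; auto).
  rewrite Cmod_mult, Cmod_mult, Cmod_inv, Cmod_mult, Cmod_mult
    by (repeat apply Cmult_neq_0; auto).
  set (u := Cmod (y - w)) in *. set (m := Cmod w) in *. set (n := Cmod y) in *.
  assert (0 <= u)%R by apply Cmod_ge_0.
  replace (2 / m ^ 3 * u ^ 2)%R with (u * u * (2 / (m * m * m)))%R by (field; lra).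
  apply Rmult_le_compat_l; [nra|].
  apply Rinv_le_contravar in Hy2; [| nra].
  unfold Rdiv. rewrite Rinv_mult, Rinv_mult.
  replace (/ (m / 2))%R with (2 * / m)%R in Hy2 by (field; lra).
  assert (0 < / m)%R by (apply Rinv_0_lt_compat; lra).
  rewrite Rinv_mult, Rinv_mult.
  replace (2 * (/ m * / m * / m))%R with (/ m * / m * (2 * / m))%R by ring.
  apply Rmult_le_compat_l; [nra | exact Hy2].
Qed.

(** Coquelicot states some derivative rules over [AbsRing_NormedModule C_AbsRing]
    rather than [C_NormedModule]; the two notions coincide. *)
Notation isD_abs f x l := (@is_derive C_AbsRing (AbsRing_NormedModule C_AbsRing) f x l).

Lemma is_derive_of_abs f x l : isD_abs f x l -> isD f x l.
Proof.
  intros [[Hadd Hscal [M [HM Hb]]] Hlim]. split; [split; auto; exists M; auto|].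
  intros y Hy eps. exact (Hlim y Hy eps).
Qed.

Lemma is_derive_to_abs f x l : isD f x l -> isD_abs f x l.
Proof.
  intros [[Hadd Hscal [M [HM Hb]]] Hlim]. split; [split; auto; exists M; auto|].
  intros y Hy eps. exact (Hlim y Hy eps).
Qed.

Ltac Cring := match goal with |- ?a = ?b => change (@eq C a b) end; cbv beta; ring.

Lemma isD_eq (f : C -> C) x l l' : isD f x l -> l = l' -> isD f x l'.
Proof. intros H <-; exact H. Qed.

Lemma isD_ext (f g : C -> C) x l : (forall t, f t = g t) -> isD f x l -> isD g x l.
Proof. intros. eapply (@is_derive_ext C_AbsRing C_NormedModule); eauto. Qed.

Lemma isD_const (c x : C) : isD (fun _ => c) x (RtoC 0).
Proof. exact (@is_derive_const C_AbsRing C_NormedModule c x). Qed.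

Lemma isD_id (x : C) : isD (fun t => t) x (RtoC 1).
Proof. apply is_derive_of_abs. exact (@is_derive_id C_AbsRing x). Qed.

Lemma isD_plus f g x df dg : isD f x df -> isD g x dg -> isD (fun t => f t + g t) x (df + dg).
Proof. intros. apply (@is_derive_plus C_AbsRing C_NormedModule); auto. Qed.

Lemma isD_mult f g x df dg : isD f x df -> isD g x dg ->
  isD (fun t => f t * g t) x (df * g x + f x * dg).
Proof.
  intros. apply is_derive_of_abs.
  apply (@is_derive_mult C_AbsRing); try apply is_derive_to_abs; auto.
  intros; apply Cmult_comm.
Qed.

Lemma isD_scal (c : C) f x df : isD f x df -> isD (fun t => c * f t) x (c * df).
Proof. intros. eapply isD_eq; [apply isD_mult; [apply isD_const | eauto]|]. Cring. Qed.

Lemma isD_opp f x df : isD f x df -> isD (fun t => - f t) x (- df).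
Proof.
  intros H. eapply isD_eq; [eapply isD_ext; [|apply (isD_scal (-1) f x df H)]|].
  - intros t; simpl; ring.
  - Cring.
Qed.

Lemma isD_comp (f g : C -> C) x df dg : isD f (g x) df -> isD g x dg ->
  isD (fun t => f (g t)) x (dg * df).
Proof. intros. apply (@is_derive_comp C_AbsRing C_NormedModule); auto. apply is_derive_to_abs; auto. Qed.

Lemma isD_cexp (g : C -> C) x dg : isD g x dg -> isD (fun t => cexp (g t)) x (dg * cexp (g x)).
Proof. intros. apply isD_comp; auto. apply is_derive_cexp. Qed.

Lemma isD_cpow (g : C -> C) x dg (n : nat) : isD g x dg ->
  isD (fun t => cpow (g t) n) x (RtoC (INR n) * dg * cpow (g x) (n - 1)).
Proof.
  intros Hg. induction n as [|n IH]; cbn [cpow].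
  - eapply isD_eq; [apply isD_const|]. apply C_eq; simpl; ring.
  - eapply isD_eq; [apply isD_mult; eauto|].
    destruct n as [|n]; cbn [cpow].
    + apply C_eq; simpl; ring.
    + replace (S (S n) - 1)%nat with (S n) by lia. replace (S n - 1)%nat with n by lia.
      rewrite (S_INR (S n)), RtoC_plus. cbn [cpow]. Cring.
Qed.

Lemma Cderiv_n_zero j : Cderiv_n j (fun _ => RtoC 0) = fun _ => RtoC 0.
Proof.
  induction j as [|j IH]; [reflexivity|]. cbn [Cderiv_n]. rewrite IH.
  apply functional_extensionality; intros z. apply Cderiv_eq, isD_const.
Qed.

Lemma sum_n_C_O (f : nat -> C) : sum_n f 0 = f O.
Proof. exact (sum_O f). Qed.

Lemma sum_n_C_S (f : nat -> C) n : sum_n f (S n) = sum_n f n + f (S n).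
Proof. exact (sum_Sn f n). Qed.

Lemma sum_n_C_plus (f g : nat -> C) n : sum_n (fun i => f i + g i) n = sum_n f n + sum_n g n.
Proof. exact (sum_n_plus f g n). Qed.

Lemma sum_n_C_scal k (f : nat -> C) n : sum_n (fun i => k * f i) n = k * sum_n f n.
Proof. exact (sum_n_mult_l k f n). Qed.

Lemma sum_n_C_minus (f g : nat -> C) n : sum_n (fun i => f i - g i) n = sum_n f n - sum_n g n.
Proof.
  induction n as [|n IH]; [rewrite !sum_n_C_O; Cring|].
  rewrite !sum_n_C_S, IH. Cring.
Qed.

Lemma sum_n_C_shift (f : nat -> C) n : sum_n f (S n) = f O + sum_n (fun i => f (S i)) n.
Proof.
  induction n as [|n IH]; [rewrite sum_n_C_S, !sum_n_C_O; Cring|].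
  rewrite sum_n_C_S, IH, sum_n_C_S. Cring.
Qed.

Lemma sum_n_C_first (f : nat -> C) N : (forall k, (1 <= k)%nat -> f k = 0) -> sum_n f N = f O.
Proof.
  intros H. induction N as [|N IH]; [apply sum_n_C_O|].
  rewrite sum_n_C_S, IH, (H (S N)) by lia. Cring.
Qed.

Lemma sum_n_C_rev (f : nat -> C) n : sum_n f n = sum_n (fun i => f (n - i)%nat) n.
Proof.
  induction n as [|n IH]; [reflexivity|].
  rewrite (sum_n_C_shift (fun i => f (S n - i)%nat)), sum_n_C_S, IH.
  replace (S n - 0)%nat with (S n) by lia.
  rewrite Cplus_comm. f_equal.
Qed.

Lemma sum_n_C_pad (f : nat -> C) A B : (A <= B)%nat ->
  sum_n f A = sum_n (fun i => if Nat.leb i A then f i else RtoC 0) B :> C.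
Proof.
  intros HAB. induction HAB as [|B HAB IH].
  - apply sum_n_ext_loc. intros i Hi. apply Nat.leb_le in Hi. rewrite Hi. reflexivity.
  - rewrite sum_n_C_S, <- IH. replace (Nat.leb (S B) A) with false
      by (symmetry; apply Nat.leb_gt; lia). symmetry; apply Cplus_0_r.
Qed.

Lemma sum_n_C_triangle (F : nat -> nat -> nat -> C) N :
  sum_n (fun k => sum_n (fun m => F m (N - k - m)%nat k) (N - k)) N =
  sum_n (fun m => sum_n (fun n => if Nat.leb (m + n) N then F m n (N - n - m)%nat else RtoC 0) N) N.
Proof.
  rewrite (sum_n_ext_loc _
     (fun k => sum_n (fun m => if Nat.leb m (N - k) then F m (N - k - m)%nat k else RtoC 0) N))
    by (intros k Hk; apply sum_n_C_pad; lia).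
  rewrite sum_n_switch. apply sum_n_ext_loc. intros m Hm.
  rewrite (sum_n_ext_loc _ (fun k => if Nat.leb k (N - m) then F m (N - k - m)%nat k else RtoC 0)).
  2: { intros k Hk. destruct (Nat.leb_spec m (N - k)), (Nat.leb_spec k (N - m)); auto; lia. }
  rewrite (sum_n_ext_loc (fun n => if Nat.leb (m + n) N then F m n (N - n - m)%nat else RtoC 0)
                         (fun n => if Nat.leb n (N - m) then F m n (N - n - m)%nat else RtoC 0)).
  2: { intros k Hk. destruct (Nat.leb_spec (m + k) N), (Nat.leb_spec k (N - m)); auto; lia. }
  rewrite <- !sum_n_C_pad by lia.
  rewrite sum_n_C_rev. apply sum_n_ext_loc. intros i Hi. f_equal; lia.
Qed.

(** * Exponential polynomials in two variables

    These are exactly the elements of A^2,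
    and the list representation makes their partial derivatives explicit. *)

Definition Fun2 := C -> C -> C.

Ltac fext2 := apply functional_extensionality; intros ?x; apply functional_extensionality; intros ?y.

Definition eterm := (C * nat * nat * C * C)%type.

Definition eterm_eval (e : eterm) (x y : C) : C :=
  let '(c, a, b, u0, u1) := e in c * cpow x a * cpow y b * cexp (u0 * x + u1 * y).

Definition epoly_eval (l : list eterm) : Fun2 :=
  fun x y => fold_right (fun e acc => eterm_eval e x y + acc) 0 l.

Lemma epoly_eval_app l1 l2 x y :
  epoly_eval (l1 ++ l2) x y = epoly_eval l1 x y + epoly_eval l2 x y.
Proof. induction l1 as [|e l1 IH]; simpl; [ring|]. unfold epoly_eval in *; simpl. rewrite IH. ring. Qed.

Definition epoly_scale (k : C) (l : list eterm) : list eterm :=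
  map (fun '(c, a, b, u0, u1) => (k * c, a, b, u0, u1)) l.
Definition epoly_mul_y (l : list eterm) : list eterm :=
  map (fun '(c, a, b, u0, u1) => (c, a, S b, u0, u1)) l.
Definition epoly_swap (l : list eterm) : list eterm :=
  map (fun '(c, a, b, u0, u1) => (c, b, a, u1, u0)) l.

Lemma epoly_scale_eval k l x y : epoly_eval (epoly_scale k l) x y = k * epoly_eval l x y.
Proof.
  induction l as [|[[[[c a] b] u0] u1] l IH]; simpl; [ring|].
  unfold epoly_eval in *; simpl. rewrite IH. ring.
Qed.

Lemma epoly_mul_y_eval l x y : epoly_eval (epoly_mul_y l) x y = y * epoly_eval l x y.
Proof.
  induction l as [|[[[[c a] b] u0] u1] l IH]; simpl; [ring|].
  unfold epoly_eval in *; simpl. rewrite IH. ring.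
Qed.

Lemma epoly_swap_eval l x y : epoly_eval (epoly_swap l) x y = epoly_eval l y x.
Proof.
  induction l as [|[[[[c a] b] u0] u1] l IH]; [reflexivity|].
  unfold epoly_eval in *; simpl. rewrite IH.
  replace (u1 * x + u0 * y) with (u0 * y + u1 * x) by ring. ring.
Qed.

Definition eterm_dx (e : eterm) : list eterm :=
  let '(c, a, b, u0, u1) := e in (c * INR a, (a - 1)%nat, b, u0, u1) :: (c * u0, a, b, u0, u1) :: nil.
Definition eterm_dy (e : eterm) : list eterm :=
  let '(c, a, b, u0, u1) := e in (c * INR b, a, (b - 1)%nat, u0, u1) :: (c * u1, a, b, u0, u1) :: nil.
Definition epoly_dx (l : list eterm) : list eterm := flat_map eterm_dx l.
Definition epoly_dy (l : list eterm) : list eterm := flat_map eterm_dy l.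

Lemma epoly_is_derive_along l (X Y : C -> C) h X' Y' : isD X h X' -> isD Y h Y' ->
  isD (fun t => epoly_eval l (X t) (Y t)) h
      (X' * epoly_eval (epoly_dx l) (X h) (Y h) + Y' * epoly_eval (epoly_dy l) (X h) (Y h)).
Proof.
  intros HX HY. induction l as [|[[[[c a] b] u0] u1] l IH].
  - eapply isD_eq; [eapply isD_ext; [|apply (isD_const 0)]; reflexivity|]. simpl. Cring.
  - eapply isD_eq; [apply isD_plus; [|apply IH]|].
    + apply isD_mult; [apply isD_mult; [apply isD_mult|]|].
      * apply isD_const.
      * apply isD_cpow; eauto.
      * apply isD_cpow; eauto.
      * apply isD_cexp. apply isD_plus; apply isD_scal; eauto.
    + unfold epoly_dx, epoly_dy. simpl flat_map. unfold epoly_eval; simpl. Cring.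
Qed.

Lemma epoly_is_derive_x l x y : isD (fun w => epoly_eval l w y) x (epoly_eval (epoly_dx l) x y).
Proof.
  eapply isD_eq.
  - apply (epoly_is_derive_along l (fun t => t) (fun _ => y)); [apply isD_id | apply isD_const].
  - Cring.
Qed.

Lemma epoly_is_derive_y l x y : isD (fun w => epoly_eval l x w) y (epoly_eval (epoly_dy l) x y).
Proof.
  eapply isD_eq.
  - apply (epoly_is_derive_along l (fun _ => x) (fun t => t)); [apply isD_const | apply isD_id].
  - Cring.
Qed.

Lemma Cderiv_epoly_x l x y : Cderiv (fun w => epoly_eval l w y) x = epoly_eval (epoly_dx l) x y.
Proof. apply Cderiv_eq, epoly_is_derive_x. Qed.

Lemma Cderiv_epoly_y l x y : Cderiv (fun w => epoly_eval l x w) y = epoly_eval (epoly_dy l) x y.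
Proof. apply Cderiv_eq, epoly_is_derive_y. Qed.

Lemma epoly_dx_dy_comm l x y :
  epoly_eval (epoly_dx (epoly_dy l)) x y = epoly_eval (epoly_dy (epoly_dx l)) x y.
Proof.
  induction l as [|e l IH]; [reflexivity|].
  change (epoly_dy (e :: l)) with (eterm_dy e ++ epoly_dy l).
  change (epoly_dx (e :: l)) with (eterm_dx e ++ epoly_dx l).
  unfold epoly_dx, epoly_dy in *. rewrite !flat_map_app, !epoly_eval_app, IH. f_equal.
  destruct e as [[[[c a] b] u0] u1]. unfold epoly_eval; simpl. ring.
Qed.

Definition ExpPoly (f : Fun2) : Prop := exists l, f = epoly_eval l.

Lemma inA2_ExpPoly f : inA2 f <-> ExpPoly f.
Proof.
  assert (E : forall (l : list eterm) x y, fold_right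
      (fun '(c, a, b, u0, u1) acc =>
         c * cpow x a * cpow y b * cexp (u0 * x + u1 * y) + acc) 0 l = epoly_eval l x y).
  { induction l as [|[[[[c a] b] u0] u1] l IH]; intros; simpl; auto. rewrite IH. reflexivity. }
  split; intros [l Hl]; exists l.
  - fext2. rewrite Hl. auto.
  - intros; rewrite Hl; auto.
Qed.

Lemma ExpPoly_zero : ExpPoly (fun _ _ => 0).
Proof. exists nil. reflexivity. Qed.

Lemma ExpPoly_add f g : ExpPoly f -> ExpPoly g -> ExpPoly (fun x y => f x y + g x y).
Proof. intros [l1 ->] [l2 ->]. exists (l1 ++ l2). fext2. rewrite epoly_eval_app; reflexivity. Qed.

Lemma ExpPoly_scal k f : ExpPoly f -> ExpPoly (fun x y => k * f x y).
Proof. intros [l ->]. exists (epoly_scale k l). fext2. rewrite epoly_scale_eval; reflexivity. Qed.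

Lemma ExpPoly_sub f g k : ExpPoly f -> ExpPoly g -> ExpPoly (fun x y => f x y - k * g x y).
Proof.
  intros Hf Hg. assert (H : ExpPoly (fun x y => f x y + (-k) * g x y))
    by (apply ExpPoly_add, ExpPoly_scal; auto).
  replace (fun x y => f x y - k * g x y) with (fun x y => f x y + (-k) * g x y); auto.
  fext2. ring.
Qed.

Lemma ExpPoly_sum (F : nat -> Fun2) n : (forall m, ExpPoly (F m)) ->
  ExpPoly (fun x y => sum_n (fun m => F m x y) n).
Proof.
  intros HF. induction n as [|n IH].
  - replace (fun x y => sum_n (fun m => F m x y) 0) with (F O); auto.
    fext2. rewrite sum_n_C_O. reflexivity.
  - replace (fun x y => sum_n (fun m => F m x y) (S n))
      with (fun x y => sum_n (fun m => F m x y) n + 1 * F (S n) x y).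
    + apply ExpPoly_add, ExpPoly_scal; auto.
    + fext2. rewrite sum_n_C_S. ring.
Qed.

Lemma ExpPoly_swap f : ExpPoly f -> ExpPoly (fun x y => f y x).
Proof. intros [l ->]. exists (epoly_swap l). fext2. rewrite epoly_swap_eval. reflexivity. Qed.

Lemma ExpPoly_is_derive_x f x y : ExpPoly f -> isD (fun w => f w y) x (Cderiv (fun w => f w y) x).
Proof. intros [l ->]. rewrite Cderiv_epoly_x. apply epoly_is_derive_x. Qed.

Lemma ExpPoly_is_derive_y f x y : ExpPoly f -> isD (fun w => f x w) y (Cderiv (fun w => f x w) y).
Proof. intros [l ->]. rewrite Cderiv_epoly_y. apply epoly_is_derive_y. Qed.

(** * The operators A = y d/dx, B = -y d/dy and D = A + B

    With x = z1 and y = z0, the (m,n)-term of rho^{(x)2}(R) P acts on the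
    hbar^k-coefficient of f as (1/(m! n!)) (B)_m A^n, where (B)_m is the
    falling factorial; D is the generator of the flow h |-> f(U(h)^T z). *)

Definition y_dx (f : Fun2) : Fun2 := fun x y => y * Cderiv (fun w => f w y) x.
Definition neg_y_dy (f : Fun2) : Fun2 := fun x y => - (y * Cderiv (fun w => f x w) y).
Definition flow_gen (f : Fun2) : Fun2 := fun x y => y_dx f x y + neg_y_dy f x y.

Fixpoint falling2 (X : Fun2 -> Fun2) (m : nat) (f : Fun2) : Fun2 :=
  match m with
  | O => f
  | S i => fun x y => X (falling2 X i f) x y - RtoC (INR i) * falling2 X i f x y
  end.

Fixpoint y_dx_pow (n : nat) (f : Fun2) : Fun2 :=
  match n with O => f | S i => y_dx (y_dx_pow i f) end.

Definition Rterm_fun (f : Fun2) (m n : nat) : Fun2 := falling2 neg_y_dy m (y_dx_pow n f).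

Lemma y_dx_epoly l : y_dx (epoly_eval l) = epoly_eval (epoly_mul_y (epoly_dx l)).
Proof. fext2. unfold y_dx. rewrite Cderiv_epoly_x, epoly_mul_y_eval. reflexivity. Qed.

Lemma neg_y_dy_epoly l : neg_y_dy (epoly_eval l) = epoly_eval (epoly_scale (-1) (epoly_mul_y (epoly_dy l))).
Proof. fext2. unfold neg_y_dy. rewrite Cderiv_epoly_y, epoly_scale_eval, epoly_mul_y_eval. ring. Qed.

Lemma ExpPoly_y_dx f : ExpPoly f -> ExpPoly (y_dx f).
Proof. intros [l ->]. rewrite y_dx_epoly. eexists; reflexivity. Qed.

Lemma ExpPoly_neg_y_dy f : ExpPoly f -> ExpPoly (neg_y_dy f).
Proof. intros [l ->]. rewrite neg_y_dy_epoly. eexists; reflexivity. Qed.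

Lemma ExpPoly_flow_gen f : ExpPoly f -> ExpPoly (flow_gen f).
Proof. intros. apply ExpPoly_add; [apply ExpPoly_y_dx | apply ExpPoly_neg_y_dy]; auto. Qed.

Lemma ExpPoly_falling2 X m f : (forall g, ExpPoly g -> ExpPoly (X g)) -> ExpPoly f ->
  ExpPoly (falling2 X m f).
Proof. intros HX Hf. induction m; simpl; auto. apply ExpPoly_sub; auto. Qed.

Lemma ExpPoly_y_dx_pow n f : ExpPoly f -> ExpPoly (y_dx_pow n f).
Proof. intros Hf. induction n; simpl; auto. apply ExpPoly_y_dx; auto. Qed.

Lemma ExpPoly_Rterm_fun f m n : ExpPoly f -> ExpPoly (Rterm_fun f m n).
Proof.
  intros. apply ExpPoly_falling2; [apply ExpPoly_neg_y_dy | apply ExpPoly_y_dx_pow; auto].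
Qed.

Lemma y_dx_lin f g k : ExpPoly f -> ExpPoly g ->
  y_dx (fun x y => f x y + k * g x y) = fun x y => y_dx f x y + k * y_dx g x y.
Proof.
  intros Hf Hg. fext2. unfold y_dx.
  rewrite (Cderiv_eq _ _ (Cderiv (fun w => f w y) x + k * Cderiv (fun w => g w y) x)); [ring|].
  apply isD_plus; [|apply isD_scal]; apply ExpPoly_is_derive_x; auto.
Qed.

Lemma neg_y_dy_lin f g k : ExpPoly f -> ExpPoly g ->
  neg_y_dy (fun x y => f x y + k * g x y) = fun x y => neg_y_dy f x y + k * neg_y_dy g x y.
Proof.
  intros Hf Hg. fext2. unfold neg_y_dy.
  rewrite (Cderiv_eq _ _ (Cderiv (fun w => f x w) y + k * Cderiv (fun w => g x w) y)); [ring|].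
  apply isD_plus; [|apply isD_scal]; apply ExpPoly_is_derive_y; auto.
Qed.

Lemma flow_gen_lin f g k : ExpPoly f -> ExpPoly g ->
  flow_gen (fun x y => f x y + k * g x y) = fun x y => flow_gen f x y + k * flow_gen g x y.
Proof. intros. unfold flow_gen. rewrite y_dx_lin, neg_y_dy_lin by auto. fext2. ring. Qed.

Lemma lin_comb_sub (f g : Fun2) k :
  (fun x y => f x y - k * g x y) = (fun x y => f x y + (-k) * g x y).
Proof. fext2. ring. Qed.

Lemma y_dx_sub f g k : ExpPoly f -> ExpPoly g ->
  y_dx (fun x y => f x y - k * g x y) = fun x y => y_dx f x y - k * y_dx g x y.
Proof. intros. rewrite lin_comb_sub, y_dx_lin by auto. fext2. ring. Qed.

Lemma flow_gen_scal k f : ExpPoly f -> flow_gen (fun x y => k * f x y) = fun x y => k * flow_gen f x y.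
Proof.
  intros Hf. fext2. unfold flow_gen, y_dx, neg_y_dy.
  rewrite (Cderiv_eq (fun w => k * f w y) x (k * Cderiv (fun w => f w y) x))
    by (apply isD_scal, ExpPoly_is_derive_x; auto).
  rewrite (Cderiv_eq (fun w => k * f x w) y (k * Cderiv (fun w => f x w) y))
    by (apply isD_scal, ExpPoly_is_derive_y; auto).
  ring.
Qed.

Lemma flow_gen_sum (F : nat -> Fun2) n : (forall m, ExpPoly (F m)) ->
  flow_gen (fun x y => sum_n (fun m => F m x y) n) = fun x y => sum_n (fun m => flow_gen (F m) x y) n.
Proof.
  intros HF. induction n as [|n IH].
  - replace (fun x y => sum_n (fun m => F m x y) 0) with (F O) by (fext2; rewrite sum_n_C_O; reflexivity).
    fext2. rewrite sum_n_C_O. reflexivity.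
  - replace (fun x y => sum_n (fun m => F m x y) (S n))
      with (fun x y => (fun x y => sum_n (fun m => F m x y) n) x y + 1 * F (S n) x y)
      by (fext2; rewrite sum_n_C_S; ring).
    rewrite flow_gen_lin, IH by (auto using ExpPoly_sum).
    fext2. rewrite sum_n_C_S. ring.
Qed.

Lemma y_dx_neg_y_dy_comm f : ExpPoly f ->
  y_dx (neg_y_dy f) = fun x y => neg_y_dy (y_dx f) x y + y_dx f x y.
Proof.
  intros [l ->]. fext2. unfold y_dx at 1, neg_y_dy at 2.
  replace (fun w => neg_y_dy (epoly_eval l) w y) with (fun w => - (y * epoly_eval (epoly_dy l) w y))
    by (apply functional_extensionality; intros w; unfold neg_y_dy; rewrite Cderiv_epoly_y; reflexivity).
  replace (fun w => y_dx (epoly_eval l) x w) with (fun w => w * epoly_eval (epoly_dx l) x w)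
    by (apply functional_extensionality; intros w; unfold y_dx; rewrite Cderiv_epoly_x; reflexivity).
  rewrite (Cderiv_eq _ _ (- (y * epoly_eval (epoly_dx (epoly_dy l)) x y)))
    by (apply isD_opp, isD_scal, epoly_is_derive_x).
  rewrite (Cderiv_eq _ _ (1 * epoly_eval (epoly_dx l) x y + y * epoly_eval (epoly_dy (epoly_dx l)) x y))
    by (apply isD_mult; [apply isD_id | apply epoly_is_derive_y]).
  unfold y_dx. rewrite Cderiv_epoly_x, epoly_dx_dy_comm. ring.
Qed.

Lemma RtoC_INR_S n : RtoC (INR (S n)) = RtoC (INR n) + 1.
Proof. rewrite S_INR, RtoC_plus. reflexivity. Qed.

(** A (B)_{m+1} = (B)_{m+1} A + (m+1) (B)_m A, a consequence of A B = (B + 1) A. *)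
Lemma y_dx_falling_neg_y_dy m g : ExpPoly g ->
  y_dx (falling2 neg_y_dy (S m) g)
  = fun x y => falling2 neg_y_dy (S m) (y_dx g) x y + RtoC (INR (S m)) * falling2 neg_y_dy m (y_dx g) x y.
Proof.
  intros Hg.
  assert (HB : forall h, ExpPoly h -> ExpPoly (neg_y_dy h)) by apply ExpPoly_neg_y_dy.
  assert (HAg : ExpPoly (y_dx g)) by (apply ExpPoly_y_dx; auto).
  induction m as [|m IH].
  - simpl falling2. rewrite y_dx_sub, y_dx_neg_y_dy_comm by auto. fext2. simpl INR. ring.
  - change (falling2 neg_y_dy (S (S m)) g) with (fun x y =>
      neg_y_dy (falling2 neg_y_dy (S m) g) x y - RtoC (INR (S m)) * falling2 neg_y_dy (S m) g x y).
    assert (HF : ExpPoly (falling2 neg_y_dy (S m) g)) by (apply ExpPoly_falling2; auto).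
    rewrite y_dx_sub, y_dx_neg_y_dy_comm, IH by auto.
    rewrite neg_y_dy_lin by (apply ExpPoly_falling2; auto).
    fext2. cbn [falling2]. rewrite !RtoC_INR_S. ring.
Qed.

Lemma flow_gen_Rterm_fun f m n x y : ExpPoly f ->
  flow_gen (Rterm_fun f m n) x y
  = Rterm_fun f m (S n) x y + RtoC (INR m) * Rterm_fun f (m - 1)%nat (S n) x y
    + Rterm_fun f (S m) n x y + RtoC (INR m) * Rterm_fun f m n x y.
Proof.
  intros Hf. unfold flow_gen. unfold Rterm_fun at 5. cbn [falling2].
  assert (HA : y_dx (Rterm_fun f m n) x y
               = Rterm_fun f m (S n) x y + RtoC (INR m) * Rterm_fun f (m - 1)%nat (S n) x y).
  { destruct m as [|m].
    - unfold Rterm_fun; simpl. ring.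
    - unfold Rterm_fun. rewrite y_dx_falling_neg_y_dy by (apply ExpPoly_y_dx_pow; auto).
      simpl y_dx_pow. replace (S m - 1)%nat with m by lia. reflexivity. }
  rewrite HA. fold (Rterm_fun f m n). ring.
Qed.

Definition invfact2 (m n : nat) : C := invfact m * invfact n.

Lemma INR_fact_neq_0 n : RtoC (INR (fact n)) <> 0.
Proof. intros H. apply RtoC_inj in H. pose proof (lt_0_INR _ (lt_O_fact n)). lra. Qed.

Lemma invfact_S n : invfact (S n) * RtoC (INR (S n)) = invfact n.
Proof.
  unfold invfact. change (fact (S n)) with (S n * fact n)%nat. rewrite mult_INR, RtoC_mult.
  assert (RtoC (INR (S n)) <> 0).
  { intros H. apply RtoC_inj in H. pose proof (lt_0_INR (S n) (Nat.lt_0_succ n)). lra. }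
  pose proof (INR_fact_neq_0 n). field. auto.
Qed.

(** Pascal's rule for the coefficients 1/(m! n!) of the binomial formula,
    written for an arbitrary family P m n of complex numbers:
    sum_{m<=M} (P(m,n+1) + m P(m-1,n+1) + P(m+1,n) - n P(m,n)) / (m! n!)
      = (M+1) sum_{m<=M+1} P(m, M+1-m) / (m! (M+1-m)!),   with n = M - m. *)
Lemma binomial_coeff_step (P : nat -> nat -> C) M :
  sum_n (fun m => invfact2 m (M - m) * (P m (S (M - m)) + RtoC (INR m) * P (m - 1)%nat (S (M - m))
      + P (S m) (M - m)%nat - RtoC (INR (M - m)%nat) * P m (M - m)%nat)) M
  = RtoC (INR (S M)) * sum_n (fun m => invfact2 m (S M - m) * P m (S M - m)%nat) (S M).
Proof.
  set (T1 := fun m => invfact2 m (M - m) * P m (S (M - m))).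
  set (T2 := fun m => invfact2 m (M - m) * RtoC (INR m) * P (m - 1)%nat (S (M - m))).
  set (T3 := fun m => invfact2 m (M - m) * P (S m) (M - m)%nat).
  set (T4 := fun m => invfact2 m (M - m) * RtoC (INR (M - m)%nat) * P m (M - m)%nat).
  rewrite (sum_n_ext_loc _ (fun m => T1 m + T2 m + T3 m - T4 m))
    by (intros; unfold T1, T2, T3, T4; Cring).
  rewrite sum_n_C_minus, !sum_n_C_plus, <- sum_n_C_scal.
  (* split the factor M + 1 = m + (M + 1 - m) *)
  rewrite (sum_n_ext_loc (fun m => RtoC (INR (S M)) * (invfact2 m (S M - m) * P m (S M - m)%nat))
    (fun m => RtoC (INR m) * (invfact2 m (S M - m) * P m (S M - m)%nat) +
      RtoC (INR (S M - m)%nat) * (invfact2 m (S M - m) * P m (S M - m)%nat))).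
  2: { intros i Hi. rewrite <- Cmult_plus_distr_r, <- RtoC_plus, <- plus_INR.
       replace (i + (S M - i))%nat with (S M) by lia. reflexivity. }
  rewrite sum_n_C_plus.
  assert (E3 : sum_n (fun m => RtoC (INR m) * (invfact2 m (S M - m) * P m (S M - m)%nat)) (S M)
               = sum_n T3 M).
  { rewrite sum_n_C_shift. change (INR 0) with 0%R. rewrite Cmult_0_l, Cplus_0_l.
    apply sum_n_ext_loc. intros i Hi. unfold T3, invfact2. simpl (S M - S i)%nat.
    rewrite <- (invfact_S i). Cring. }
  assert (E1 : sum_n (fun m => RtoC (INR (S M - m)%nat) * (invfact2 m (S M - m) * P m (S M - m)%nat)) (S M)
               = sum_n T1 M).
  { rewrite sum_n_C_S, Nat.sub_diag. change (INR 0) with 0%R. rewrite Cmult_0_l, Cplus_0_r.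
    apply sum_n_ext_loc. intros i Hi. unfold T1, invfact2. replace (S M - i)%nat with (S (M - i)) by lia.
    rewrite <- (invfact_S (M - i)). Cring. }
  assert (E24 : sum_n T2 M = sum_n T4 M).
  { destruct M as [|K]; [rewrite !sum_n_C_O; unfold T2, T4; simpl INR; Cring|].
    rewrite sum_n_C_shift, sum_n_C_S. unfold T2 at 1, T4 at 2.
    rewrite Nat.sub_diag. change (INR 0) with 0%R. rewrite !Cmult_0_r, !Cmult_0_l, Cplus_0_l, Cplus_0_r.
    apply sum_n_ext_loc. intros i Hi. unfold T2, T4, invfact2. simpl (S K - S i)%nat. simpl (S i - 1)%nat.
    rewrite Nat.sub_0_r. replace (S K - i)%nat with (S (K - i)) by lia.
    rewrite <- (invfact_S i), <- (invfact_S (K - i)). Cring. }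
  rewrite E1, E3, E24. Cring.
Qed.

(** The binomial formula (D)_M = M! sum_{m <= M} (B)_m A^{M-m} / (m! (M-m)!),
    valid because A B = (B + 1) A. *)
Lemma falling_flow_binomial (f : Fun2) M : ExpPoly f ->
  falling2 flow_gen M f
  = fun x y => RtoC (INR (fact M)) * sum_n (fun m => invfact2 m (M - m) * Rterm_fun f m (M - m) x y) M.
Proof.
  intros Hf. induction M as [|M IH].
  - fext2. cbn [falling2]. rewrite sum_n_C_O. unfold invfact2, invfact, Rterm_fun. simpl.
    replace (/ RtoC 1) with (RtoC 1) by (apply C_eq; simpl; field). ring.
  - assert (HT : forall m, ExpPoly (fun x y => invfact2 m (M - m) * Rterm_fun f m (M - m) x y))
      by (intros; apply ExpPoly_scal, ExpPoly_Rterm_fun; auto).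
    cbn [falling2]. rewrite IH, flow_gen_scal, flow_gen_sum by (auto using ExpPoly_sum).
    fext2.
    assert (Hstep : sum_n (fun m => flow_gen (fun x y => invfact2 m (M - m) * Rterm_fun f m (M - m) x y) x y) M
         - RtoC (INR M) * sum_n (fun m => invfact2 m (M - m) * Rterm_fun f m (M - m) x y) M
       = sum_n (fun m => invfact2 m (M - m) * (Rterm_fun f m (S (M - m)) x y
            + RtoC (INR m) * Rterm_fun f (m - 1)%nat (S (M - m)) x y + Rterm_fun f (S m) (M - m)%nat x y
            - RtoC (INR (M - m)%nat) * Rterm_fun f m (M - m)%nat x y)) M).
    { rewrite <- sum_n_C_scal, <- sum_n_C_minus. apply sum_n_ext_loc. intros i Hi.
      rewrite flow_gen_scal, flow_gen_Rterm_fun by (auto using ExpPoly_Rterm_fun).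
      rewrite minus_INR, RtoC_minus by lia. Cring. }
    change (fact (S M)) with (S M * fact M)%nat. rewrite mult_INR, RtoC_mult.
    rewrite (Cmult_comm (RtoC (INR (S M)))), <- Cmult_assoc,
      <- (binomial_coeff_step (fun m n => Rterm_fun f m n x y)), <- Hstep.
    Cring.
Qed.

(** * Taylor expansion of the flow h |-> f(U(h)^T z)

    With t = 1/(1+h) one has t' = -t^2, and the two coordinates X, Y of
    U(h)^T z satisfy X' = t Y, Y' = -t Y; hence d/dh f(X, Y) = t (D f)(X, Y)
    and, inductively, (d/dh)^j f(X, Y) = t^j ((D)_j f)(X, Y). *)

Lemma isD_t_of h : 1 + h <> 0 -> isD t_of h (- (t_of h * t_of h)).
Proof.
  intros H. unfold t_of. eapply isD_eq.
  - apply (isD_comp Cinv (fun h => 1 + h)); [apply is_derive_Cinv; auto|].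
    eapply isD_eq; [apply isD_plus; [apply isD_const | apply isD_id]|reflexivity].
  - Cring.
Qed.

Lemma one_plus_neq_0 h : (Cmod h < /2)%R -> 1 + h <> 0.
Proof.
  intros Hh E. pose proof (Cmod_triangle (1 + h) (- h)) as T.
  replace (1 + h + - h) with (RtoC 1) in T by ring.
  rewrite E, Cmod_0, Cmod_opp, Cmod_1 in T. lra.
Qed.

Lemma small_disc_locally h : (Cmod h < /2)%R ->
  @locally (AbsRing_UniformSpace C_AbsRing) h (fun h' : C_AbsRing => (Cmod h' < /2)%R).
Proof.
  intros Hh. assert (Hr : (0 < /2 - Cmod h)%R) by lra.
  apply (filter_imp (fun y => @ball_norm C_AbsRing (AbsRing_NormedModule C_AbsRing) h (mkposreal _ Hr) y)).
  2: apply (@locally_ball_norm C_AbsRing (AbsRing_NormedModule C_AbsRing)).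
  intros y Hy. unfold ball_norm in Hy. simpl in Hy.
  change (Cmod (y - h) < /2 - Cmod h)%R in Hy.
  change C in y. pose proof (Cmod_triangle h (y - h)) as T.
  replace (h + (y - h)) with y in T by ring. lra.
Qed.

Section Flow.
Variables z0 z1 : C.

Definition flow_x (h : C) : C := fst (mtv (Umat h) (z0, z1)).
Definition flow_y (h : C) : C := snd (mtv (Umat h) (z0, z1)).

Lemma isD_flow_x h : 1 + h <> 0 -> isD flow_x h (t_of h * t_of h * z0).
Proof.
  intros H. unfold flow_x; simpl. eapply isD_eq.
  - eapply isD_ext with (f := fun h => (1 + - t_of h) * z0 + RtoC 1 * z1); [reflexivity|].
    apply isD_plus; [|apply isD_const]. apply isD_mult; [|apply isD_const].
    apply isD_plus; [apply isD_const|]. apply isD_opp, isD_t_of; auto.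
  - Cring.
Qed.

Lemma isD_flow_y h : 1 + h <> 0 -> isD flow_y h (- (t_of h * t_of h) * z0).
Proof.
  intros H. unfold flow_y; simpl. eapply isD_eq.
  - apply isD_plus; [|apply isD_const]. apply isD_mult; [|apply isD_const]. apply isD_t_of; auto.
  - Cring.
Qed.

Lemma isD_along_flow (g : Fun2) h : ExpPoly g -> 1 + h <> 0 ->
  isD (fun h => g (flow_x h) (flow_y h)) h (t_of h * flow_gen g (flow_x h) (flow_y h)).
Proof.
  intros [l ->] H. eapply isD_eq.
  - apply epoly_is_derive_along; [apply isD_flow_x | apply isD_flow_y]; auto.
  - unfold flow_gen, y_dx, neg_y_dy. rewrite Cderiv_epoly_x, Cderiv_epoly_y.
    unfold flow_y; simpl. Cring.
Qed.

Lemma Cderiv_n_along_flow (f : Fun2) j : ExpPoly f -> forall h, (Cmod h < /2)%R ->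
  Cderiv_n j (fun h => f (flow_x h) (flow_y h)) h
  = cpow (t_of h) j * falling2 flow_gen j f (flow_x h) (flow_y h).
Proof.
  intros Hf. induction j as [|j IH]; intros h Hh; [simpl; ring|].
  cbn [Cderiv_n]. apply Cderiv_eq.
  assert (HF : ExpPoly (falling2 flow_gen j f)) by (apply ExpPoly_falling2; auto using ExpPoly_flow_gen).
  eapply (@is_derive_ext_loc C_AbsRing C_NormedModule
            (fun h => cpow (t_of h) j * falling2 flow_gen j f (flow_x h) (flow_y h))).
  { apply (filter_imp (fun h' : C_AbsRing => (Cmod h' < /2)%R)); [|apply small_disc_locally; auto].
    intros y Hy. symmetry. apply IH; auto. }
  eapply isD_eq.
  - apply isD_mult; [apply isD_cpow, isD_t_of | apply isD_along_flow]; auto using one_plus_neq_0.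
  - cbn [falling2]. destruct j as [|j].
    + simpl INR. cbn [cpow]. Cring.
    + replace (S j - 1)%nat with j by lia. cbn [cpow]. Cring.
Qed.

End Flow.

Lemma cpow_1 j : cpow 1 j = 1.
Proof. induction j as [|j IH]; simpl; [reflexivity|]. rewrite IH. ring. Qed.

Lemma taylor_along_flow (f : Fun2) j z0 z1 : ExpPoly f ->
  taylor j (fun h => f (flow_x z0 z1 h) (flow_y z0 z1 h)) = falling2 flow_gen j f z1 z0 * invfact j.
Proof.
  intros Hf. unfold taylor. rewrite Cderiv_n_along_flow by (auto; rewrite Cmod_0; lra).
  replace (flow_x z0 z1 0) with z1 by (unfold flow_x, t_of; simpl; apply C_eq; simpl; field).
  replace (flow_y z0 z1 0) with z0 by (unfold flow_y, t_of; simpl; apply C_eq; simpl; field).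
  replace (t_of 0) with (RtoC 1) by (unfold t_of; apply C_eq; simpl; field).
  rewrite cpow_1. ring.
Qed.

Lemma rho_a_minus_id_pow m (F : S1) k z :
  op_pow (op_sub rho_a op_id) m F k z = if Nat.leb m k then F (k - m)%nat z else 0.
Proof.
  revert k z. induction m as [|m IH]; intros k z.
  - simpl. rewrite Nat.sub_0_r. reflexivity.
  - change (op_pow (op_sub rho_a op_id) (S m) F k z)
      with (rho_a (op_pow (op_sub rho_a op_id) m F) k z - op_pow (op_sub rho_a op_id) m F k z).
    destruct k as [|k]; [simpl; ring|].
    unfold rho_a. rewrite !IH. simpl Nat.leb. simpl (S k - S m)%nat.
    destruct (Nat.leb m k); ring.
Qed.

Lemma rho_phi_pow n (F : S1) k z :
  op_pow rho_phi n F k z = if Nat.leb n k then cpow z n * F (k - n)%nat z else 0.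
Proof.
  revert k z. induction n as [|n IH]; intros k z.
  - change (op_pow rho_phi 0 F k z) with (F k z). simpl Nat.leb. rewrite Nat.sub_0_r.
    cbn [cpow]. ring.
  - change (op_pow rho_phi (S n) F k z) with (rho_phi (op_pow rho_phi n F) k z).
    destruct k as [|k]; [reflexivity|].
    unfold rho_phi at 1. rewrite IH. simpl Nat.leb. simpl (S k - S n)%nat.
    destruct (Nat.leb n k); cbn [cpow]; ring.
Qed.

Lemma rho_b_pow n (F : S1) k : op_pow rho_b n F k = Cderiv_n n (F k).
Proof.
  induction n as [|n IH]; [reflexivity|]. apply functional_extensionality; intros z.
  change (op_pow rho_b (S n) F k z) with (Cderiv (op_pow rho_b n F k) z).
  rewrite IH. reflexivity.
Qed.

Lemma falling_rho_psi m (F : S1) k (g : Fun2) x :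
  F k = (fun w => g x w) -> forall z, falling rho_psi m F k z = falling2 neg_y_dy m g x z.
Proof.
  intros HF. induction m as [|m IH]; intros z.
  - change (falling rho_psi 0 F k z) with (F k z). rewrite HF. reflexivity.
  - change (falling rho_psi (S m) F k z) with
      (- (z * Cderiv (falling rho_psi m F k) z) - RtoC (INR m) * falling rho_psi m F k z).
    replace (falling rho_psi m F k) with (fun w => falling2 neg_y_dy m g x w)
      by (symmetry; apply functional_extensionality; auto).
    reflexivity.
Qed.

Lemma Cderiv_n_epoly_x n l y :
  Cderiv_n n (fun v => epoly_eval l v y) = fun v => epoly_eval (Nat.iter n epoly_dx l) v y.
Proof.
  induction n as [|n IH]; [reflexivity|]. cbn [Cderiv_n]. rewrite IH.
  apply functional_extensionality; intros v. apply Cderiv_epoly_x.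
Qed.

Lemma y_dx_pow_eq n (g : Fun2) x y : ExpPoly g ->
  y_dx_pow n g x y = cpow y n * Cderiv_n n (fun v => g v y) x.
Proof.
  intros [l ->]. revert x y. induction n as [|n IH]; intros x y; [simpl; ring|].
  cbn [y_dx_pow]. unfold y_dx.
  replace (fun w => y_dx_pow n (epoly_eval l) w y)
    with (fun w => cpow y n * epoly_eval (Nat.iter n epoly_dx l) w y)
    by (apply functional_extensionality; intros w; rewrite IH, Cderiv_n_epoly_x; reflexivity).
  rewrite (Cderiv_eq _ _ (cpow y n * epoly_eval (epoly_dx (Nat.iter n epoly_dx l)) x y))
    by (apply isD_scal, epoly_is_derive_x).
  rewrite Cderiv_n_epoly_x. cbn [cpow]. simpl Nat.iter. ring.
Qed.

Lemma falling2_neg_y_dy_zero m x z : falling2 neg_y_dy m (fun _ _ => 0) x z = 0.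
Proof.
  revert x z. induction m as [|m IH]; intros x z; [reflexivity|].
  cbn [falling2].
  change (neg_y_dy (falling2 neg_y_dy m (fun _ _ => 0)) x z)
    with (- (z * Cderiv (fun w => falling2 neg_y_dy m (fun _ _ => 0) x w) z)).
  replace (fun w => falling2 neg_y_dy m (fun _ _ => 0) x w) with (fun _ : C => RtoC 0)
    by (apply functional_extensionality; auto).
  rewrite IH, (Cderiv_eq _ _ 0) by apply isD_const. ring.
Qed.

Lemma Rterm_swap_eval (G : S2) m n N z0 z1 : (forall k, ExpPoly (G k)) ->
  Rterm m n (Pswap G) N z0 z1 =
  if Nat.leb (m + n) N then invfact2 m n * Rterm_fun (G (N - n - m)%nat) m n z1 z0 else 0.
Proof.
  intros HG.
  set (Fin := fun (j : nat) (w : C) =>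
     op_comp (op_pow (op_sub rho_a op_id) m) (op_pow rho_b n) (fun j' v => Pswap G j' w v) j z1).
  change (Rterm m n (Pswap G) N z0 z1) with
    (invfact n * (invfact m * falling rho_psi m (op_pow rho_phi n Fin) N z0)).
  set (g := if Nat.leb (m + n) N then y_dx_pow n (G (N - n - m)%nat) else (fun _ _ => 0)).
  rewrite (falling_rho_psi m _ N g z1).
  2: { apply functional_extensionality; intros w. rewrite rho_phi_pow. unfold Fin, op_comp.
       rewrite rho_a_minus_id_pow, rho_b_pow. unfold g, Pswap.
       destruct (Nat.leb_spec (m + n) N) as [Hmn|Hmn].
       - replace (Nat.leb n N) with true by (symmetry; apply Nat.leb_le; lia).
         replace (Nat.leb m (N - n)) with true by (symmetry; apply Nat.leb_le; lia).
         rewrite y_dx_pow_eq by auto. reflexivity.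
       - destruct (Nat.leb_spec n N); [|reflexivity].
         replace (Nat.leb m (N - n)) with false by (symmetry; apply Nat.leb_gt; lia). ring. }
  unfold g, invfact2, Rterm_fun. destruct (Nat.leb (m + n) N).
  - ring.
  - rewrite falling2_neg_y_dy_zero. ring.
Qed.

Lemma inA2ser_ExpPoly (G : S2) : inA2ser G -> forall k, ExpPoly (G k).
Proof. intros H k. apply inA2_ExpPoly, H. Qed.

Lemma inA2ser_Pswap (G : S2) : inA2ser G -> inA2ser (Pswap G).
Proof.
  intros H k. apply inA2_ExpPoly, (ExpPoly_swap (G k)), inA2ser_ExpPoly; auto.
Qed.

Lemma Rterm_high_order (G : S2) : inA2ser G -> forall m n N, (N < m + n)%nat ->
  forall z0 z1, Rterm m n G N z0 z1 = 0.
Proof.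
  intros HG m n N HN z0 z1.
  change (Rterm m n G N z0 z1) with (Rterm m n (Pswap (Pswap G)) N z0 z1).
  rewrite Rterm_swap_eval by (apply inA2ser_ExpPoly, inA2ser_Pswap; auto).
  replace (Nat.leb (m + n) N) with false by (symmetry; apply Nat.leb_gt; lia). reflexivity.
Qed.

Lemma r_op_eval (G : S2) N z0 z1 : inA2ser G ->
  r_op G N z0 z1 = sum_n (fun m => sum_n (fun n =>
     if Nat.leb (m + n) N then invfact2 m n * Rterm_fun (G (N - n - m)%nat) m n z1 z0
     else RtoC 0) N) N.
Proof.
  intros HG. apply sum_n_ext_loc. intros m Hm. apply sum_n_ext_loc. intros n Hn.
  apply Rterm_swap_eval, inA2ser_ExpPoly; auto.
Qed.

Lemma r_op_inA2ser (G : S2) : inA2ser G -> inA2ser (r_op G).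
Proof.
  intros HG N. apply inA2_ExpPoly.
  replace (r_op G N) with (fun z0 z1 => sum_n (fun m => sum_n (fun n =>
     if Nat.leb (m + n) N then invfact2 m n * Rterm_fun (G (N - n - m)%nat) m n z1 z0
     else RtoC 0) N) N) by (fext2; symmetry; apply r_op_eval; auto).
  apply ExpPoly_sum; intros m. apply ExpPoly_sum; intros n.
  destruct (Nat.leb (m + n) N); [|apply ExpPoly_zero].
  apply ExpPoly_scal, (ExpPoly_swap (Rterm_fun _ m n)), ExpPoly_Rterm_fun, inA2ser_ExpPoly; auto.
Qed.

(** The hbar^N coefficient of G(U^T z): by the Taylor formula along the flow
    and the binomial formula for (D)_j, a sum over k + m <= N. *)
Lemma substU_eval (G : S2) N z0 z1 : inA2ser G ->
  substU G N z0 z1 = sum_n (fun k => sum_n (fun m =>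
     invfact2 m (N - k - m) * Rterm_fun (G k) m (N - k - m)%nat z1 z0) (N - k)) N.
Proof.
  intros HG. apply sum_n_ext_loc. intros k Hk.
  change (hser _ (N - k)%nat z0 z1)
    with (taylor (N - k)%nat (fun h => G k (flow_x z0 z1 h) (flow_y z0 z1 h))).
  rewrite taylor_along_flow, falling_flow_binomial by (apply inA2ser_ExpPoly; auto).
  unfold invfact. field_simplify; [reflexivity | apply INR_fact_neq_0].
Qed.

Lemma r_op_eq_substU (G : S2) : inA2ser G -> forall N z0 z1, r_op G N z0 z1 = substU G N z0 z1.
Proof.
  intros HG N z0 z1. rewrite r_op_eval, substU_eval by auto.
  symmetry. apply (sum_n_C_triangle (fun m n k => invfact2 m n * Rterm_fun (G k) m n z1 z0)).
Qed.

Lemma inA2ser_coherent v : inA2ser (cser (coh v)).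
Proof.
  intros k. apply inA2_ExpPoly. destruct k; [|apply ExpPoly_zero].
  exists ((RtoC 1, 0%nat, 0%nat, fst v, snd v) :: nil). fext2. unfold coh, epoly_eval. simpl. ring.
Qed.

(** Coherent states: only the hbar^0 coefficient of cser (coh v) is nonzero. *)
Lemma r_op_coherent (v : C * C) N z0 z1 :
  r_op (cser (coh v)) N z0 z1 = hser (fun h => coh (mv (Umat h) v)) N z0 z1.
Proof.
  rewrite r_op_eq_substU by apply inA2ser_coherent. unfold substU.
  rewrite sum_n_C_first.
  - rewrite Nat.sub_0_r. unfold hser. f_equal. apply functional_extensionality; intros h.
    unfold coh. simpl. f_equal. ring.
  - intros k Hk. destruct k as [|k]; [lia|]. unfold hser, taylor. simpl cser.
    rewrite Cderiv_n_zero. ring.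
Qed.

Theorem mainTheorem6 :
  (* well-definedness: the (m,n)-term of rho^{(x)2}(R) lies in hbar^{m+n} *)
  (forall (G : S2), inA2ser G ->
     forall (m n N : nat), (N < m + n)%nat ->
       forall z0 z1, Rterm m n G N z0 z1 = 0) /\
  (* r maps A^2[[hbar]] to A^2[[hbar]] *)
  (forall (G : S2), inA2ser G -> inA2ser (r_op G)) /\
  (* (r f)(z) = f(U^T z) *)
  (forall (G : S2), inA2ser G ->
     forall (N : nat) (z0 z1 : C), r_op G N z0 z1 = substU G N z0 z1) /\
  (* r phi_v = phi_{U v} *)
  (forall (v : C * C) (N : nat) (z0 z1 : C),
     r_op (cser (coh v)) N z0 z1 = hser (fun h => coh (mv (Umat h) v)) N z0 z1).
Proof.
  split; [exact Rterm_high_order|].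
  split; [exact r_op_inA2ser|].
  split; [exact r_op_eq_substU|].
  exact r_op_coherent.
Qed.
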